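(* Let $f\in\mathbb{R}[\mathbf{x}]$, $\mathscr{A}=\operatorname{supp}(f)$, and $\mathscr{B}=\frac12\operatorname{New}(f)\cap\mathbb{N}^n$. Define $\mathscr{B}_0=\emptyset$ and, for $p\ge1$, $\mathscr{B}_p=\{\beta\in\mathscr{B}:\exists\gamma\in\mathscr{B}\text{ with }\beta+\gamma\in\mathscr{A}\cup2\mathscr{B}_{p-1}\}$, and let $\mathscr{B}_*=\bigcup_{p\ge1}\mathscr{B}_p$. If $f=(\mathbf{x}^{\mathscr{B}})^\intercal\mathbf{G}\,\mathbf{x}^{\mathscr{B}}$ for some scaled diagonally dominant symmetric matrix $\mathbf{G}$ indexed by $\mathscr{B}$, then $f=(\mathbf{x}^{\mathscr{B}_*})^\intercal\tilde{\mathbf{G}}\,\mathbf{x}^{\mathscr{B}_*}$ for some scaled diagonally dominant symmetric matrix $\tilde{\mathbf{G}}$ indexed by $\mathscr{B}_*$.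
   Context: $\operatorname{New}(f)$ is the Newton polytope of $f$, the convex hull of $\operatorname{supp}(f)\subseteq\mathbb{N}^n$; $2S=\{2\beta:\beta\in S\}$; $\mathbf{x}^{S}=(\mathbf{x}^\beta)_{\beta\in S}$. A symmetric matrix $\mathbf{G}$ is diagonally dominant if $\mathbf{G}_{ii}\ge\sum_{j\ne i}|\mathbf{G}_{ij}|$ for every $i$, and scaled diagonally dominant if $\mathbf{D}\mathbf{G}\mathbf{D}$ is diagonally dominant for some positive definite diagonal matrix $\mathbf{D}$. *)

From HB Require Import structures.
From mathcomp Require Import all_boot all_order all_algebra.
From mathcomp.multinomials Require Import mpoly.
From Stdlib Require Import ClassicalEpsilon.

Set Implicit Arguments.
Unset Strict Implicit.
Unset Printing Implicit Defensive.

Import Order.TTheory GRing.Theory Num.Theory.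
Local Open Scope ring_scope.

(* Classical decision of a proposition, used to carve finite subsets of *)
(* monomials out of a finite box by a non-boolean predicate.            *)
Definition pb (P : Prop) : bool :=
  if excluded_middle_informative P then true else false.

Section Defs.
Variables (n : nat) (R : realFieldType).

Definition in_newton (f : {mpoly R[n]}) (x : 'I_n -> R) : Prop :=
  exists w : 'X_{1..n} -> R,
    (forall a, a \in msupp f -> 0 <= w a) /\
    \sum_(a <- msupp f) w a = 1 /\
    (forall i : 'I_n, x i = \sum_(a <- msupp f) w a * ((a i)%:R)).

(* Candidate exponents: all monomials of total degree < msize f (the     *)
(* lattice points of (1/2)New(f) all lie in this box).                  *)
Definition mbox (d : nat) : seq 'X_{1..n} :=
  [seq val m | m <- enum {: bmultinom n d }].

Definition halfNewton (f : {mpoly R[n]}) : seq 'X_{1..n} :=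
  [seq b : 'X_{1..n} <- mbox (msize f) | pb (in_newton f (fun i => (2 * b i)%:R))].

Fixpoint Bp (f : {mpoly R[n]}) (p : nat) : seq 'X_{1..n} :=
  match p with
  | 0 => [::]
  | p'.+1 =>
      [seq b <- halfNewton f |
        has (fun g => ((b + g)%MM \in msupp f) ||
                      ((b + g)%MM \in [seq (c + c)%MM | c <- Bp f p']))
            (halfNewton f)]
  end.

Definition Bstar (f : {mpoly R[n]}) : seq 'X_{1..n} :=
  [seq b <- halfNewton f | pb (exists p, (0 < p)%N /\ b \in Bp f p)].

(* (x^S)^T G x^S for a matrix G indexed by the (duplicate-free) list S *)
Definition gram (S : seq 'X_{1..n}) (G : 'X_{1..n} -> 'X_{1..n} -> R)
  : {mpoly R[n]} :=
  \sum_(b <- S) \sum_(c <- S) G b c *: 'X_[(b + c)%MM].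

Definition sym_on (S : seq 'X_{1..n}) (G : 'X_{1..n} -> 'X_{1..n} -> R) :=
  forall b c, b \in S -> c \in S -> G b c = G c b.

Definition diag_dom_on (S : seq 'X_{1..n}) (G : 'X_{1..n} -> 'X_{1..n} -> R) :=
  forall b, b \in S -> \sum_(c <- S | c != b) `|G b c| <= G b b.

Definition sdd_on (S : seq 'X_{1..n}) (G : 'X_{1..n} -> 'X_{1..n} -> R) :=
  exists d : 'X_{1..n} -> R,
    (forall b, b \in S -> 0 < d b) /\
    diag_dom_on S (fun b c => d b * G b c * d c).

End Defs.

(* Call m tainted if m = b + c with b in B \ B_* and c in B.  A tainted m  *)
(* lies outside supp f, since otherwise b would be in B_1; and 2e is never  *)
(* tainted for e in B_p, since otherwise b would be in B_(p+1).  Zeroing    *)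
(* the entries of G at tainted positions thus keeps the diagonal on B_* and *)
(* only shrinks off-diagonal entries, so the same scaling still makes it    *)
(* diagonally dominant; and the Gram form over B_* still equals f, because  *)
(* every pair meeting B \ B_* only feeds tainted, hence zero, coefficients. *)
From HB Require Import structures.
From mathcomp Require Import all_boot all_order all_algebra.
From mathcomp.multinomials Require Import mpoly.
From Stdlib Require Import ClassicalEpsilon.

Set Implicit Arguments.
Unset Strict Implicit.
Unset Printing Implicit Defensive.

Import Order.TTheory GRing.Theory Num.Theory.
Local Open Scope ring_scope.

Lemma pbE (P : Prop) : pb P = true <-> P.
Proof. by rewrite /pb; case: excluded_middle_informative. Qed.

Section GramMask.
Variables (n : nat) (R : realFieldType).
Implicit Types (S : seq 'X_{1..n}) (G : 'X_{1..n} -> 'X_{1..n} -> R).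

Definition mask_gram (T : pred 'X_{1..n}) G b c := if T (b + c)%MM then 0 else G b c.

Lemma coef_gram S G m :
  (gram S G)@_m = \sum_(b <- S) \sum_(c <- S) (if (b + c)%MM == m then G b c else 0).
Proof.
rewrite /gram raddf_sum; apply: eq_bigr => b _.
rewrite raddf_sum; apply: eq_bigr => c _.
by rewrite /= mcoeffZ mcoeffX; case: eqP; rewrite ?mulr1 ?mulr0.
Qed.

Lemma sym_on_filter_mask S (P T : pred 'X_{1..n}) G :
  sym_on S G -> sym_on [seq b <- S | P b] (mask_gram T G).
Proof.
move=> symG b c; rewrite !mem_filter => /andP[_ bS] /andP[_ cS].
by rewrite /mask_gram addmC symG.
Qed.

Lemma diag_dom_on_filter S (P : pred 'X_{1..n}) G G' :
  (forall b c, `|G' b c| <= `|G b c|) ->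
  (forall b, b \in [seq b <- S | P b] -> G' b b = G b b) ->
  diag_dom_on S G -> diag_dom_on [seq b <- S | P b] G'.
Proof.
move=> le_G'G diagG' ddG b bPS; rewrite diagG' //.
apply: le_trans (ddG b _); last by move: bPS; rewrite mem_filter => /andP[].
rewrite big_filter_cond big_mkcondl /=; apply: ler_sum => c _.
by case: (P c) => //; rewrite normr_ge0.
Qed.

Lemma sdd_on_filter S (P : pred 'X_{1..n}) G G' :
  (forall b c, `|G' b c| <= `|G b c|) ->
  (forall b, b \in [seq b <- S | P b] -> G' b b = G b b) ->
  sdd_on S G -> sdd_on [seq b <- S | P b] G'.
Proof.
move=> le_G'G diagG' [d [dpos ddG]]; exists d; split.
  by move=> b; rewrite mem_filter => /andP[_ /dpos].
apply: diag_dom_on_filter ddG => [b c|b /diagG' -> //].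
by rewrite !normrM ler_wpM2r ?ler_wpM2l.
Qed.

Lemma abs_mask_gram_le (T : pred 'X_{1..n}) G b c :
  `|mask_gram T G b c| <= `|G b c|.
Proof. by rewrite /mask_gram; case: (T _); rewrite ?normr0. Qed.

Lemma gram_filter_mask S (P T : pred 'X_{1..n}) G :
  (forall b c, b \in S -> ~~ P b -> c \in S -> T (b + c)%MM) ->
  (forall m, T m -> (gram S G)@_m = 0) ->
  gram S G = gram [seq b <- S | P b] (mask_gram T G).
Proof.
move=> T_out coef_T; apply/mpolyP => m.
have [Tm | nTm] := boolP (T m).
  rewrite coef_T // coef_gram big1 // => b _; rewrite big1 // => c _.
  by rewrite /mask_gram; case: eqP => // ->; rewrite Tm.
have hit_m b c : b \in S -> ~~ P b -> c \in S -> (b + c)%MM != m.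
  by move=> bS nPb cS; apply: contraNneq nTm => <-; apply: T_out.
rewrite !coef_gram big_filter -[LHS](big_rmcond_in _ (P := P)) => [|b bS nPb]; last first.
  by rewrite big1_seq // => c /andP[_ cS]; rewrite (negbTE (hit_m b c bS nPb cS)).
rewrite big_seq_cond [RHS]big_seq_cond; apply: eq_bigr => b /andP[bS _].
rewrite big_filter -[LHS](big_rmcond_in _ (P := P)) => [|c cS nPc]; last first.
  by rewrite addmC (negbTE (hit_m c b cS nPc bS)).
by apply: eq_bigr => c _; rewrite /mask_gram; case: eqP => // ->; rewrite (negbTE nTm).
Qed.

End GramMask.

Section HalfNewtonReduction.
Variables (n : nat) (R : realFieldType) (f : {mpoly R[n]}).
Local Notation B := (halfNewton f).

Lemma mem_Bstar p b : (0 < p)%N -> b \in Bp f p -> b \in B -> b \in Bstar f.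
Proof. by move=> p_gt0 bBp bB; rewrite mem_filter bB andbT; apply/pbE; exists p. Qed.

Lemma Bstar_supp b c : b \in B -> c \in B -> (b + c)%MM \in msupp f -> b \in Bstar f.
Proof.
move=> bB cB bc_f; apply: (mem_Bstar (p := 1)) => //.
by rewrite /= mem_filter bB andbT; apply/hasP; exists c; rewrite ?bc_f.
Qed.

Lemma Bstar_double b c e :
  b \in B -> c \in B -> e \in Bstar f -> (b + c)%MM = (e + e)%MM -> b \in Bstar f.
Proof.
move=> bB cB; rewrite mem_filter => /andP[/pbE[p [p_gt0 eBp]] _] bc_ee.
apply: (mem_Bstar (p := p.+1)) => //.
rewrite /= mem_filter bB andbT; apply/hasP; exists c => //.
by rewrite bc_ee; apply/orP; right; apply: map_f.
Qed.

Definition tainted (m : 'X_{1..n}) : bool :=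
  has (fun b => (b \notin Bstar f) && has (fun c => (b + c)%MM == m) B) B.

Lemma tainted_sum b c : b \in B -> b \notin Bstar f -> c \in B -> tainted (b + c)%MM.
Proof. by move=> bB bN cB; apply/hasP; exists b; rewrite // bN; apply/hasP; exists c. Qed.

Lemma tainted_notin_msupp m : tainted m -> m \notin msupp f.
Proof.
case/hasP=> b bB /andP[bN /hasP[c cB /eqP <-]].
by apply: contra bN; apply: Bstar_supp.
Qed.

Lemma tainted_double e : e \in Bstar f -> ~~ tainted (e + e)%MM.
Proof.
move=> eBs; apply/hasP=> -[b bB /andP[bN /hasP[c cB /eqP bc_ee]]].
by move: bN; rewrite (Bstar_double bB cB eBs bc_ee).
Qed.

End HalfNewtonReduction.

Theorem proposition7p2 (n : nat) (R : realFieldType) (f : {mpoly R[n]})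
    (G : 'X_{1..n} -> 'X_{1..n} -> R) :
  sym_on (halfNewton f) G ->
  sdd_on (halfNewton f) G ->
  f = gram (halfNewton f) G ->
  exists G' : 'X_{1..n} -> 'X_{1..n} -> R,
    [/\ sym_on (Bstar f) G', sdd_on (Bstar f) G' & f = gram (Bstar f) G'].
Proof.
move=> symG sddG fE; exists (mask_gram (tainted f) G); split.
- exact: sym_on_filter_mask.
- apply: sdd_on_filter sddG => [b c|e]; first exact: abs_mask_gram_le.
  by rewrite -/(Bstar f) /mask_gram => /tainted_double /negbTE ->.
- rewrite {1}fE; apply: gram_filter_mask => [b c bB nPb cB|m].
    by apply: tainted_sum; rewrite // mem_filter negb_and nPb.
  by rewrite -fE => /tainted_notin_msupp /memN_msupp_eq0.
Qed.
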